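(* Let $\Omega\subset\mathbb{R}^N$ be a bounded domain, $\lambda>0$, $\delta\in(0,1)$, $T>0$, $u_0\in L^2(\Omega)$. Define $g_\delta:\mathbb{R}\to\mathbb{R}$ by $g_\delta(s)=\frac{1}{1-s}$ for $s\le1-\delta$ and $g_\delta(s)=\delta^{-1}$ for $s>1-\delta$, and for $v\in L^2(\Omega)$ define \[ f_\delta(v)=\lambda\,\bigl(g_\delta(v)\bigr)^2\Bigl(1+\int_\Omega g_\delta(v)\,dx\Bigr)^{-2}. \] Let $M=\|u_0\|_{L^2}+1$ and \[ Y_M=\bigl\{u\in C([0,T];L^2(\Omega)):\ \|u\|_{L^\infty([0,T];L^2(\Omega))}\le M\bigr\}. \] Then $f_\delta$ is Lipschitz continuous on $Y_M$: there is a constant $L$ such that $\|f_\delta(u_1(t))-f_\delta(u_2(t))\|_{L^2(\Omega)}\le L\|u_1(t)-u_2(t)\|_{L^2(\Omega)}$ for all $u_1,u_2\in Y_M$ and $t\in[0,T]$. *)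

From HB Require Import structures.
From mathcomp Require Import all_boot all_order all_algebra.
From mathcomp Require Import all_classical all_reals all_analysis.
Import GRing.Theory Num.Theory numFieldNormedType.Exports.
Set Implicit Arguments.
Unset Strict Implicit.
Unset Printing Implicit Defensive.
Local Open Scope ring_scope.
Local Open Scope classical_set_scope.

Record mspace (R : realType) := MSpace {
  ms_disp : measure_display;
  ms_car : measurableType ms_disp;
  ms_meas : {measure set ms_car -> \bar R} }.
Arguments MSpace {R ms_disp ms_car}.
Arguments ms_meas {R}.
Arguments ms_car {R}.

(** R^n as the iterated product R * (R * ( ... * unit)) equipped with the
    product of n copies of the Lebesgue measure (and the Dirac measure on
    the one-point space unit). *)
Fixpoint RNspace (R : realType) (n : nat) : mspace R :=
  match n with
  | 0 => MSpace (\d_tt : {measure set unit -> \bar R})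
  | n.+1 => MSpace (((@lebesgue_measure R) \x^ ms_meas (RNspace R n))%E
      : {measure set (_ * ms_car (RNspace R n))%type -> \bar R})
  end.

Fixpoint RNcoords (R : realType) (n : nat) : ms_car (RNspace R n) -> seq R :=
  match n with
  | 0 => fun _ => [::]
  | n.+1 => fun p => p.1 :: RNcoords p.2
  end.

Definition to_rV (R : realType) (n : nat) (x : ms_car (RNspace R n)) : 'rV[R]_n :=
  \row_(i < n) nth 0 (RNcoords x) i.

Definition lebN (R : realType) (n : nat) := ms_meas (RNspace R n).

Definition setN (R : realType) (n : nat) (A : set 'rV[R]_n) : set (ms_car (RNspace R n)) :=
  @to_rV R n @^-1` A.

Definition intN (R : realType) (n : nat) (A : set 'rV[R]_n) (h : 'rV[R]_n -> \bar R) : \bar R :=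
  (\int[lebN R n]_(x in setN A) h (to_rV x))%E.

(** v belongs to L^2(A) (v is a representative of its class) *)
Definition L2 (R : realType) (n : nat) (A : set 'rV[R]_n) (v : 'rV[R]_n -> R) : Prop :=
  measurable_fun (setN A) (v \o @to_rV R n) /\
  (intN A (fun x => ((v x) ^+ 2)%:E) < +oo)%E.

Definition L2norm (R : realType) (n : nat) (A : set 'rV[R]_n) (v : 'rV[R]_n -> R) : R :=
  Num.sqrt (fine (intN A (fun x => ((v x) ^+ 2)%:E))).

Definition g_delta (R : realType) (delta : R) (s : R) : R :=
  if s <= 1 - delta then (1 - s)^-1 else delta^-1.

Definition f_delta (R : realType) (n : nat) (Omega : set 'rV[R]_n) (lambda delta : R)
    (v : 'rV[R]_n -> R) : 'rV[R]_n -> R :=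
  fun x => lambda * (g_delta delta (v x)) ^+ 2 *
    (1 + fine (intN Omega (fun y => (g_delta delta (v y))%:E))) ^- 2.

Definition C0TL2 (R : realType) (n : nat) (Omega : set 'rV[R]_n) (T : R)
    (u : R -> 'rV[R]_n -> R) : Prop :=
  (forall t, 0 <= t <= T -> L2 Omega (u t)) /\
  (forall t, 0 <= t <= T -> forall eps : R, 0 < eps -> exists eta : R, 0 < eta /\
     forall s, 0 <= s <= T -> `|s - t| < eta ->
       L2norm Omega (fun x => u s x - u t x) < eps).

(** Y_M = { u in C([0,T];L^2(Omega)) : ||u||_{L^infty(0,T;L^2(Omega))} <= M }.
    For u continuous in time, the L^infty-in-time norm is the sup over [0,T]. *)
Definition Y_M (R : realType) (n : nat) (Omega : set 'rV[R]_n) (T M : R)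
    (u : R -> 'rV[R]_n -> R) : Prop :=
  C0TL2 Omega T u /\ (forall t, 0 <= t <= T -> L2norm Omega (u t) <= M).

(* The truncation makes g_delta bounded by 1/delta and (1/delta^2)-Lipschitz on
   all of R.  Writing
   f(u) = lambda P^2 a^2 with P = g_delta(u) and a = (1 + \int_Omega g_delta(u))^-1,
   the identity P^2 a^2 - Q^2 b^2 = (P - Q)(P + Q) a^2 + Q^2 (a - b)(a + b)
   bounds |f(u_1) - f(u_2)| pointwise by |u_1 - u_2| plus the difference of the
   nonlocal integrals, which is at most delta^-2 ||u_1 - u_2||_{L^1} and hence,
   by Cauchy-Schwarz, at most delta^-2 |Omega|^(1/2) ||u_1 - u_2||_{L^2}.
   Integrating the square over Omega, which has finite Lebesgue measure as an
   open bounded set, gives L = sqrt(8 lambda^2 delta^-6 (1 + delta^-2 |Omega|^2)). *)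

From HB Require Import structures.
From mathcomp Require Import all_boot all_order all_algebra.
From mathcomp Require Import all_classical all_reals all_analysis.
From mathcomp Require Import ring lra measurable_realfun.
Import GRing.Theory Num.Theory Order.TTheory numFieldNormedType.Exports.
Set Implicit Arguments.
Unset Strict Implicit.
Unset Printing Implicit Defensive.
Local Open Scope ring_scope.
Local Open Scope classical_set_scope.

Section real_estimates.
Variable R : realFieldType.

Lemma dist_inv_le (c x y : R) : 0 < c -> c <= x -> c <= y ->
  `|x^-1 - y^-1| <= c^-1 ^+ 2 * `|x - y|.
Proof.
move=> c0 cx cy.
have x0 : 0 < x := lt_le_trans c0 cx.
have y0 : 0 < y := lt_le_trans c0 cy.
have -> : x^-1 - y^-1 = (y - x) / (x * y) by field; rewrite !gt_eqF.
rewrite normrM normfV distrC (gtr0_norm (mulr_gt0 x0 y0)) mulrC ler_wpM2r //.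
by rewrite exprVn lef_pV2 ?posrE ?exprn_gt0 ?mulr_gt0 // expr2 ler_pM // ltW.
Qed.

Lemma dist_sqr_mul_le (d p q a b : R) :
  0 <= p <= d -> 0 <= q <= d -> 0 <= a <= 1 -> 0 <= b <= 1 ->
  `|p ^+ 2 * a ^+ 2 - q ^+ 2 * b ^+ 2| <= 2 * d * `|p - q| + 2 * d ^+ 2 * `|a - b|.
Proof.
move=> /andP[p0 pd] /andP[q0 qd] /andP[a0 a1] /andP[b0 b1].
have -> : p ^+ 2 * a ^+ 2 - q ^+ 2 * b ^+ 2 =
  (p - q) * ((p + q) * a ^+ 2) + (a - b) * (q ^+ 2 * (a + b)) by ring.
have coef_pq_le : `|(p + q) * a ^+ 2| <= 2 * d.
  rewrite ger0_norm ?mulr_ge0 ?addr_ge0 ?exprn_ge0 // -[2 * d]mulr1.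
  by rewrite ler_pM ?addr_ge0 ?exprn_ge0 ?expr_le1 //; lra.
have coef_ab_le : `|q ^+ 2 * (a + b)| <= 2 * d ^+ 2.
  rewrite ger0_norm ?mulr_ge0 ?addr_ge0 ?exprn_ge0 // mulrC.
  by rewrite ler_pM ?addr_ge0 ?exprn_ge0 ?lerXn2r ?nnegrE //; lra.
apply: le_trans (ler_normD _ _) _; rewrite (normrM (p - q)) (normrM (a - b)).
by apply: lerD; rewrite mulrC ler_wpM2r.
Qed.

Lemma sqr_le_of_quadratic_ge0 (m k x : R) : 0 <= m -> 0 <= x ->
  (forall c, 0 <= c -> 2 * c * x <= k + c ^+ 2 * m) -> x ^+ 2 <= m * k.
Proof.
move=> m0 x0 quad; have k0 : 0 <= k by have := quad 0 (lexx _); lra.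
have [m_eq0|m_neq0] := eqVneq m 0.
  have [->|x_neq0] := eqVneq x 0; first by rewrite expr0n mulr_ge0.
  have := quad ((k + 1) / x); rewrite m_eq0 mulr0 addr0 -mulrA divfK //.
  by rewrite divr_ge0 ?addr_ge0 // => /(_ isT); lra.
have m_gt0 : 0 < m by rewrite lt_def m_neq0.
have := quad (x / m) (divr_ge0 x0 m0).
set c := x / m; have -> : x = c * m by rewrite divfK.
nra.
Qed.

Lemma sqr_le_of_norm_leD (x u v : R) : 0 <= u -> 0 <= v ->
  `|x| <= u + v -> x ^+ 2 <= 2 * (u ^+ 2 + v ^+ 2).
Proof.
move=> u_ge0 v_ge0 x_le; rewrite -real_normK ?num_real //.
apply: le_trans (_ : _ <= (u + v) ^+ 2) _; first by rewrite ler_sqr ?nnegrE ?addr_ge0.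
rewrite -subr_ge0 (_ : _ - _ = (u - v) ^+ 2) ?sqr_ge0 //; ring.
Qed.
End real_estimates.

Section g_delta.
Variables (R : realType) (delta : R).
Hypothesis delta_gt0 : 0 < delta.

Lemma g_deltaE s : g_delta delta s = (Num.max (1 - s) delta)^-1.
Proof.
rewrite /g_delta; case: leP => h; congr (_^-1).
  by apply/esym/max_idPl; lra.
by apply/esym/max_idPr; lra.
Qed.

Lemma g_delta_gt0 s : 0 < g_delta delta s.
Proof. by rewrite g_deltaE invr_gt0 lt_max delta_gt0 orbT. Qed.

Lemma g_delta_le s : g_delta delta s <= delta^-1.
Proof. by rewrite g_deltaE lef_pV2 ?posrE ?lt_max ?delta_gt0 ?orbT // le_max lexx orbT. Qed.

Lemma g_delta_lipschitz s t :
  `|g_delta delta s - g_delta delta t| <= delta^-1 ^+ 2 * `|s - t|.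
Proof.
rewrite !g_deltaE; apply: le_trans (dist_inv_le delta_gt0 _ _) _; rewrite ?le_max ?lexx ?orbT //.
apply: ler_wpM2l; first by rewrite exprn_ge0 // invr_ge0 ltW.
rewrite ler_norml; have := ler_norm (s - t); have := ler_norm (t - s); rewrite distrC.
by case: (leP (1 - s) delta); case: (leP (1 - t) delta) => ? ? ? ?;
  rewrite ?max_r ?max_l; try lra; apply/andP; split; lra.
Qed.

Lemma continuous_g_delta : continuous (g_delta delta).
Proof.
move=> s; apply/cvgrPdist_lt => e e_gt0; apply/nbhs_ballP.
exists (e * delta ^+ 2); first by rewrite /= mulr_gt0 ?exprn_gt0.
move=> t /= st; apply: le_lt_trans (g_delta_lipschitz s t) _.
by rewrite exprVn mulrC ltr_pdivrMr ?exprn_gt0.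
Qed.

Lemma measurable_g_delta : measurable_fun setT (g_delta delta).
Proof. exact: continuous_measurable_fun continuous_g_delta. Qed.

Lemma dist_g_delta_scaled_le (lambda A B s t : R) :
  0 <= lambda -> 0 <= A -> 0 <= B ->
  `|lambda * g_delta delta s ^+ 2 * (1 + A) ^- 2 -
    lambda * g_delta delta t ^+ 2 * (1 + B) ^- 2| <=
  lambda * (2 * delta^-1 ^+ 3 * `|s - t| + 2 * delta^-1 ^+ 2 * `|A - B|).
Proof.
move=> lambda_ge0 A_ge0 B_ge0; set d := delta^-1.
have d_ge0 : 0 <= d by rewrite invr_ge0 ltW.
have g_bounds x : 0 <= g_delta delta x <= d by rewrite ltW ?g_delta_gt0 ?g_delta_le.
have inv_bounds (x : R) : 0 <= x -> 0 <= (1 + x)^-1 <= 1.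
  by move=> x_ge0; rewrite invr_ge0 invr_le1 ?unitf_gt0; lra.
have dist_inv : `|(1 + A)^-1 - (1 + B)^-1| <= `|A - B|.
  have := dist_inv_le (@ltr01 R) (_ : 1 <= 1 + A) (_ : 1 <= 1 + B).
  by rewrite invr1 expr1n mul1r opprD addrACA subrr add0r; apply; lra.
rewrite -!exprVn (_ : _ - _ = lambda * (g_delta delta s ^+ 2 * (1 + A)^-1 ^+ 2 -
  g_delta delta t ^+ 2 * (1 + B)^-1 ^+ 2)); last by ring.
rewrite normrM ger0_norm // ler_wpM2l //.
apply: le_trans (dist_sqr_mul_le (g_bounds s) (g_bounds t)
  (inv_bounds _ A_ge0) (inv_bounds _ B_ge0)) _.
apply: lerD; last by rewrite ler_wpM2l ?mulr_ge0 ?exprn_ge0.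
have -> : 2 * d ^+ 3 * `|s - t| = 2 * d * (d ^+ 2 * `|s - t|) by ring.
by rewrite ler_wpM2l ?mulr_ge0 ?g_delta_lipschitz.
Qed.

Lemma dist_g_delta_scaled_sqr_le (lambda A B s t : R) :
  0 <= lambda -> 0 <= A -> 0 <= B ->
  (lambda * g_delta delta s ^+ 2 * (1 + A) ^- 2 -
   lambda * g_delta delta t ^+ 2 * (1 + B) ^- 2) ^+ 2 <=
  8 * lambda ^+ 2 * delta^-1 ^+ 6 * (s - t) ^+ 2 +
  8 * lambda ^+ 2 * delta^-1 ^+ 4 * (A - B) ^+ 2.
Proof.
move=> lambda_ge0 A_ge0 B_ge0; have d_ge0 : 0 <= delta^-1 by rewrite invr_ge0 ltW.
have := dist_g_delta_scaled_le s t lambda_ge0 A_ge0 B_ge0; rewrite mulrDr.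
move/sqr_le_of_norm_leD; rewrite !mulr_ge0 ?exprn_ge0 // => /(_ isT isT).
move=> /le_trans; apply.
rewrite -(real_normK (num_real (s - t))) -(real_normK (num_real (A - B))).
by rewrite -subr_ge0 (_ : _ - _ = 0) //; ring.
Qed.
End g_delta.

Section integral_estimates.
Local Open Scope ereal_scope.
Context d (T : measurableType d) (R : realType) (mu : {measure set T -> \bar R}).
Variable D : set T.
Hypotheses (mD : measurable D) (muD : mu D < +oo).

Let measurable_sqr (a : T -> R) :
  measurable_fun D a -> measurable_fun D (fun x => (a x ^+ 2)%:E).
Proof. by move=> ma; apply/measurable_EFinP/measurable_funX. Qed.

Lemma integral_sqrB_lty (a b : T -> R) :
  measurable_fun D a -> measurable_fun D b ->
  \int[mu]_(x in D) (a x ^+ 2)%:E < +oo -> \int[mu]_(x in D) (b x ^+ 2)%:E < +oo ->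
  \int[mu]_(x in D) ((a x - b x) ^+ 2)%:E < +oo.
Proof.
move=> ma mb ia ib; have sqr_ge0E (x : R) : 0 <= (x ^+ 2)%:E by rewrite lee_fin sqr_ge0.
apply: le_lt_trans (_ : _ <= \int[mu]_(x in D)
    (2%:E * (a x ^+ 2)%:E + 2%:E * (b x ^+ 2)%:E)) _.
  apply: ge0_le_integral => //.
  - by apply: measurable_sqr; exact: measurable_funB.
  - by apply: emeasurable_funD; apply: measurable_funeM; exact: measurable_sqr.
  - move=> x _; rewrite -!EFinM -EFinD lee_fin.
    by have := sqr_ge0 (a x + b x); rewrite !expr2; lra.
rewrite ge0_integralD //; last 4 first.
- by move=> x _; rewrite mule_ge0.
- by apply: measurable_funeM; exact: measurable_sqr.
- by move=> x _; rewrite mule_ge0.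
- by apply: measurable_funeM; exact: measurable_sqr.
rewrite !ge0_integralZl //; try exact: measurable_sqr.
by rewrite lte_add_pinfty // lte_mul_pinfty.
Qed.

Lemma integral_abs_amgm (h : T -> R) (c : R) : measurable_fun D h -> (0 <= c)%R ->
  (2 * c)%:E * \int[mu]_(x in D) `|h x|%:E <=
  \int[mu]_(x in D) (h x ^+ 2)%:E + (c ^+ 2)%:E * mu D.
Proof.
move=> mh c0; have mabs : measurable_fun D (fun x => `|h x|%:E).
  exact/measurable_EFinP/measurableT_comp.
rewrite -ge0_integralZl ?lee_fin ?mulr_ge0 // -integral_cst // -ge0_integralD //; last 3 first.
- by move=> x _; rewrite lee_fin sqr_ge0.
- exact: measurable_sqr.
- by move=> x _; rewrite lee_fin sqr_ge0.
apply: ge0_le_integral => //.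
- by move=> x _; rewrite mule_ge0 ?lee_fin ?mulr_ge0.
- exact: measurable_funeM.
- by apply: emeasurable_funD => //; exact: measurable_sqr.
move=> x _; rewrite -EFinM -EFinD lee_fin -(real_normK (num_real (h x))).
by have := sqr_ge0 (`|h x| - c); rewrite !expr2; lra.
Qed.

Lemma integral_abs_fin_num (h : T -> R) : measurable_fun D h ->
  \int[mu]_(x in D) (h x ^+ 2)%:E < +oo -> \int[mu]_(x in D) `|h x|%:E \is a fin_num.
Proof.
move=> mh ih; rewrite ge0_fin_numE ?integral_ge0 //.
have := integral_abs_amgm mh ler01; rewrite mulr1 expr1n mul1e.
move=> /le_lt_trans/(_ (lte_add_pinfty ih muD)).
by case: (\int[mu]_(x in D) _) => [r| |] //; rewrite ?ltry // gt0_muley.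
Qed.

Lemma cauchy_schwarz_integral (h : T -> R) : measurable_fun D h ->
  \int[mu]_(x in D) (h x ^+ 2)%:E < +oo ->
  (fine (\int[mu]_(x in D) `|h x|%:E) ^+ 2 <=
   fine (mu D) * fine (\int[mu]_(x in D) (h x ^+ 2)%:E))%R.
Proof.
move=> mh ih; have habs := integral_abs_fin_num mh ih.
have hsqr : \int[mu]_(x in D) (h x ^+ 2)%:E \is a fin_num.
  by rewrite ge0_fin_numE ?integral_ge0 // => x _; rewrite lee_fin sqr_ge0.
have muDfin : mu D \is a fin_num by rewrite ge0_fin_numE.
apply: sqr_le_of_quadratic_ge0; rewrite ?fine_ge0 ?integral_ge0 //.
move=> c c0; rewrite -lee_fin EFinD !EFinM !fineK //.
exact: integral_abs_amgm.
Qed.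


Lemma integrable_g_delta (delta : R) (a : T -> R) : (0 < delta)%R ->
  measurable_fun D a -> mu.-integrable D (fun x => (g_delta delta (a x))%:E).
Proof.
move=> delta_gt0 ma; have mga := measurableT_comp (measurable_g_delta delta_gt0) ma.
apply/integrableP; split; first exact/measurable_EFinP.
apply: le_lt_trans (_ : _ <= \int[mu]_(x in D) (delta^-1)%:E) _.
  apply: ge0_le_integral => //.
  - exact/measurableT_comp/measurable_EFinP.
  - by move=> x _; rewrite lee_fin gtr0_norm ?g_delta_gt0 ?g_delta_le.
by rewrite integral_cst // lte_mul_pinfty // lee_fin invr_ge0 ltW.
Qed.

Lemma dist_integral_g_delta_le (delta : R) (a b : T -> R) : (0 < delta)%R ->
  measurable_fun D a -> measurable_fun D b ->
  \int[mu]_(x in D) `|a x - b x|%:E \is a fin_num ->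
  (`|fine (\int[mu]_(x in D) (g_delta delta (a x))%:E) -
     fine (\int[mu]_(x in D) (g_delta delta (b x))%:E)| <=
   delta^-1 ^+ 2 * fine (\int[mu]_(x in D) `|a x - b x|%:E))%R.
Proof.
move=> delta_gt0 ma mb fin_ab.
have mg f : measurable_fun D f -> measurable_fun D (fun x => g_delta delta (f x)).
  exact: measurableT_comp (measurable_g_delta delta_gt0).
have mgab : measurable_fun D (fun x => (g_delta delta (a x) - g_delta delta (b x))%:E).
  by apply/measurable_EFinP/measurable_funB; exact: mg.
have ia := integrable_g_delta delta_gt0 ma; have ib := integrable_g_delta delta_gt0 mb.
have fa := integrable_fin_num mD ia; have fb := integrable_fin_num mD ib.
have fab : \int[mu]_(x in D) (g_delta delta (a x))%:E -
    \int[mu]_(x in D) (g_delta delta (b x))%:E \is a fin_num by rewrite fin_numB fa fb.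
rewrite -lee_fin -fineB // -fine_abse // fineK ?abse_fin_num //.
rewrite EFinM fineK // -integralB_EFin //.
apply: le_trans (le_abse_integral _ mD mgab) _.
rewrite -ge0_integralZl ?lee_fin ?exprn_ge0 ?invr_ge0 ?(ltW delta_gt0) //; last first.
  exact/measurable_EFinP/measurableT_comp/measurable_funB.
apply: ge0_le_integral => //.
- exact/measurableT_comp.
- by apply/measurable_funeM/measurable_EFinP/measurableT_comp/measurable_funB.
by move=> x _; rewrite /= -EFinM lee_fin g_delta_lipschitz.
Qed.

End integral_estimates.

Section f_delta_on.
Context d (T : measurableType d) (R : realType) (mu : {measure set T -> \bar R}).
Variable D : set T.
Hypotheses (mD : measurable D) (muD : (mu D < +oo)%E).
Variables (lambda delta : R).
Hypotheses (lambda_ge0 : 0 <= lambda) (delta_gt0 : 0 < delta).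

(* [L2norm] and [f_delta] on an arbitrary finite measure space: for
   [mu := lebN R n] and [D := setN Omega] they unfold to [L2norm Omega] and
   [f_delta Omega]. *)
Definition L2norm_on (a : T -> R) : R :=
  Num.sqrt (fine (\int[mu]_(x in D) (a x ^+ 2)%:E)).

Definition f_delta_on (a : T -> R) (x : T) : R :=
  lambda * g_delta delta (a x) ^+ 2 *
  (1 + fine (\int[mu]_(y in D) (g_delta delta (a y))%:E)) ^- 2.

Let I (a : T -> R) : R := fine (\int[mu]_(y in D) (g_delta delta (a y))%:E).

Let I_ge0 a : 0 <= I a.
Proof. by apply/fine_ge0/integral_ge0 => x _; rewrite lee_fin ltW ?g_delta_gt0. Qed.

Let c_ge0 k : 0 <= 8 * lambda ^+ 2 * delta^-1 ^+ k.
Proof. by rewrite !mulr_ge0 ?exprn_ge0 ?invr_ge0 // ltW. Qed.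

Lemma integral_dist_f_delta_on_sqr_le (a b : T -> R) :
  measurable_fun D a -> measurable_fun D b ->
  (\int[mu]_(x in D) ((f_delta_on a x - f_delta_on b x) ^+ 2)%:E <=
   (8 * lambda ^+ 2 * delta^-1 ^+ 6)%:E * \int[mu]_(x in D) ((a x - b x) ^+ 2)%:E +
   (8 * lambda ^+ 2 * delta^-1 ^+ 4 * (I a - I b) ^+ 2)%:E * mu D)%E.
Proof.
move=> ma mb.
have mg f : measurable_fun D f -> measurable_fun D (fun x => g_delta delta (f x)).
  exact: measurableT_comp (measurable_g_delta delta_gt0).
rewrite -ge0_integralZl ?lee_fin //; last 2 first.
- exact/measurable_EFinP/measurable_funX/measurable_funB.
- by move=> x _; rewrite lee_fin sqr_ge0.
rewrite -integral_cst // -ge0_integralD //; last 3 first.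
- by move=> x _; rewrite mule_ge0 ?lee_fin ?sqr_ge0.
- exact/measurable_funeM/measurable_EFinP/measurable_funX/measurable_funB.
- by move=> x _; rewrite /= lee_fin mulr_ge0 ?sqr_ge0.
apply: ge0_le_integral => //.
- by move=> x _; rewrite lee_fin sqr_ge0.
- apply/measurable_EFinP/measurable_funX/measurable_funB;
    by apply/measurable_funM/measurable_cst/measurable_funM/measurable_funX/mg.
- apply/emeasurable_funD/measurable_cst.
  exact/measurable_funeM/measurable_EFinP/measurable_funX/measurable_funB.
move=> x _; rewrite /= -!EFinM -EFinD lee_fin.
exact: dist_g_delta_scaled_sqr_le (I_ge0 a) (I_ge0 b).
Qed.

Lemma dist_integral_g_delta_sqr_le (a b : T -> R) :
  measurable_fun D a -> measurable_fun D b ->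
  (\int[mu]_(x in D) ((a x - b x) ^+ 2)%:E < +oo)%E ->
  (I a - I b) ^+ 2 <=
  delta^-1 ^+ 4 * (fine (mu D) * fine (\int[mu]_(x in D) ((a x - b x) ^+ 2)%:E)).
Proof.
move=> ma mb iab; have mab : measurable_fun D (fun x => a x - b x).
  exact: measurable_funB.
have := dist_integral_g_delta_le mD muD delta_gt0 ma mb (integral_abs_fin_num mD muD mab iab).
move: (cauchy_schwarz_integral mD muD mab iab).
set X := fine _ => CS hI; have X_ge0 : 0 <= X by rewrite fine_ge0 ?integral_ge0.
rewrite -real_normK ?num_real //; apply: le_trans (_ : _ <= (delta^-1 ^+ 2 * X) ^+ 2) _.
  by rewrite ler_sqr ?nnegrE ?mulr_ge0 ?exprn_ge0 ?invr_ge0 // ltW.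
by rewrite exprMn -exprM ler_wpM2l ?exprn_ge0 ?invr_ge0 // ltW.
Qed.

Lemma f_delta_on_lipschitz (a b : T -> R) :
  measurable_fun D a -> measurable_fun D b ->
  (\int[mu]_(x in D) (a x ^+ 2)%:E < +oo)%E ->
  (\int[mu]_(x in D) (b x ^+ 2)%:E < +oo)%E ->
  L2norm_on (fun x => f_delta_on a x - f_delta_on b x) <=
  Num.sqrt (8 * lambda ^+ 2 * delta^-1 ^+ 6 * (1 + delta^-1 ^+ 2 * fine (mu D) ^+ 2)) *
  L2norm_on (fun x => a x - b x).
Proof.
move=> ma mb ia ib; have iab := integral_sqrB_lty mD ma mb ia ib.
have dist_I := dist_integral_g_delta_sqr_le ma mb iab.
have le_int := integral_dist_f_delta_on_sqr_le ma mb.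
have K_fin : (\int[mu]_(x in D) ((a x - b x) ^+ 2)%:E)%E \is a fin_num.
  by rewrite ge0_fin_numE // integral_ge0 // => x _; rewrite lee_fin sqr_ge0.
rewrite -(fineK K_fin) -[mu D]fineK ?ge0_fin_numE // -!EFinM -EFinD in le_int.
rewrite /L2norm_on; move: dist_I le_int.
set m := fine (mu D); set K := fine (\int[mu]_(x in D) ((a x - b x) ^+ 2)%:E).
move=> dist_I le_int; have m_ge0 : 0 <= m by rewrite fine_ge0.
have K_ge0 : 0 <= K by rewrite fine_ge0 ?integral_ge0 // => x _; rewrite lee_fin sqr_ge0.
rewrite -sqrtrM; last by rewrite mulr_ge0 ?c_ge0 // addr_ge0 // mulr_ge0 ?sqr_ge0.
apply: ler_wsqrtr; rewrite -lee_fin fineK; last first.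
  rewrite ge0_fin_numE ?(le_lt_trans le_int) ?ltry // integral_ge0 // => x _.
  by rewrite lee_fin sqr_ge0.
apply: le_trans le_int _; rewrite lee_fin.
have -> : 8 * lambda ^+ 2 * delta^-1 ^+ 6 * (1 + delta^-1 ^+ 2 * m ^+ 2) * K =
    8 * lambda ^+ 2 * delta^-1 ^+ 6 * K +
    8 * lambda ^+ 2 * delta^-1 ^+ 4 * (delta^-1 ^+ 4 * (m * K)) * m.
  by ring.
by rewrite lerD2l ler_wpM2r // ler_wpM2l.
Qed.

End f_delta_on.

Section lebesgue_RN.
Variable R : realType.

Fixpoint RNbox (n : nat) (a b : nat -> R) : set (ms_car (RNspace R n)) :=
  match n with
  | 0 => setT
  | n.+1 => `]a 0%N, b 0%N[ `*` @RNbox n (a \o S) (b \o S)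
  end.
Arguments RNbox : clear implicits.

Lemma RNboxE n a b (p : ms_car (RNspace R n)) :
  RNbox n a b p <-> forall i, (i < n)%N -> a i < nth 0 (RNcoords p) i < b i.
Proof.
elim: n a b p => [|n IHn] a b p /=; first by [].
rewrite /= in_itv /=; split.
  by move=> [p1 /IHn pn] [|i] //= /pn.
by move=> h; split; [exact: (h 0%N) | apply/IHn => i; exact: (h i.+1)].
Qed.

Lemma measurable_RNbox n a b : measurable (RNbox n a b).
Proof.
elim: n a b => [|n IHn] a b; first exact: measurableT.
exact: measurableX (measurable_itv _) (IHn _ _).
Qed.

Lemma RNbox_lty n a b : (lebN R n (RNbox n a b) < +oo)%E.
Proof.
elim: n a b => [|n IHn] a b; first by rewrite /lebN /= diracT ltry.
have itv_lty (x y : R) : (lebesgue_measure `]x, y[%classic < +oo)%E.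
  by rewrite lebesgue_measure_itv /=; case: ifP; rewrite ?ltry.
rewrite /lebN /= (@product_measure2E _ _ _ _ R lebesgue_measure (ms_meas (RNspace R n)));
  [|exact: measurable_itv|exact: measurable_RNbox].
by rewrite lte_mul_pinfty ?measure_ge0 ?IHn // ge0_fin_numE ?measure_ge0 ?itv_lty.
Qed.

Lemma coord_le_norm n (x : 'rV[R]_n) (i : 'I_n) : `|x ord0 i| <= `|x|.
Proof. by rewrite [leRHS]mx_normrE (le_bigmax _ _ (ord0, i)). Qed.

Definition rat_box n (k : nat) : set (ms_car (RNspace R n)) :=
  if (unpickle k : option (seq rat * rat)) is Some (s, r) then
    RNbox n (fun i => ratr (nth 0 s i) - ratr r) (fun i => ratr (nth 0 s i) + ratr r)
  else set0.

(* An open set is the union of the countably many rational boxes it contains. *)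
Lemma measurable_setN n (Omega : set 'rV[R]_n) : open Omega -> measurable (setN Omega).
Proof.
move=> Omega_open.
suff -> : setN Omega = \bigcup_(k in [set k | rat_box k `<=` setN Omega]) rat_box k.
  apply: bigcup_measurable => k _; rewrite /rat_box.
  by case: (unpickle k) => [[s r]|]; [exact: measurable_RNbox | exact: measurable0].
apply/seteqP; split => [p Omega_p|p [k sub]]; last exact: sub.
have /nbhs_ballP[e e_gt0 Omega_ball] := Omega_open _ Omega_p.
have [r] := rat_in_itvoo (divr_gt0 e_gt0 (ltr0Sn _ 1)).
rewrite in_itv /= => /andP[r_gt0 r_lt].
have [c close_c] : {c : nat -> rat & forall i, `|ratr (c i) - nth 0 (RNcoords p) i| < ratr r}.
  apply: (@choice _ _ (fun i (q : rat) => `|ratr q - nth 0 (RNcoords p) i| < ratr r)) => i.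
  set x := nth 0 (RNcoords p) i.
  have [q] : exists q : rat, ratr q \in `]x - ratr r, x + ratr r[%R.
    by apply: rat_in_itvoo; rewrite ltrBlDr -addrA ltrDl addr_gt0.
  by rewrite in_itv /= => qx; exists q; rewrite ltr_distl.
exists (pickle (mkseq c n, r)); rewrite /= /rat_box pickleK.
  move=> q /RNboxE q_box; apply: Omega_ball.
  rewrite /ball /=; split => // i j; rewrite /ball /= !mxE.
  have := q_box j (ltn_ord j); rewrite nth_mkseq // => /andP[q_lo q_hi].
  by have := close_c j; rewrite !ltr_distl => /andP[? ?]; apply/andP; split; lra.
apply/RNboxE => i lt_in; rewrite nth_mkseq //.
by have := close_c i; rewrite ltr_distlC.
Qed.

Lemma setN_lty n (Omega : set 'rV[R]_n) :
  open Omega -> bounded_set Omega -> (lebN R n (setN Omega) < +oo)%E.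
Proof.
move=> Omega_open [M [_ Omega_le]].
have sub : setN Omega `<=` RNbox n (fun=> - (M + 2)) (fun=> M + 2).
  move=> p Omega_p; apply/RNboxE => i lt_in.
  have p_le : `|to_rV p| <= M + 1 by apply: (Omega_le (M + 1)); rewrite ?ltrDl.
  have := le_trans (coord_le_norm (to_rV p) (Ordinal lt_in)) p_le.
  by rewrite mxE ler_norml => /andP[? ?]; apply/andP; split; lra.
apply: le_lt_trans (RNbox_lty n _ _).
by apply: le_measure sub; rewrite inE; [exact: measurable_setN | exact: measurable_RNbox].
Qed.

End lebesgue_RN.

Theorem lemma3p1 (R : realType) (N : nat) (Omega : set 'rV[R]_N)
    (lambda delta T : R) (u0 : 'rV[R]_N -> R) :
  open Omega -> connected Omega -> bounded_set Omega -> Omega !=set0 ->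
  0 < lambda -> 0 < delta < 1 -> 0 < T ->
  L2 Omega u0 ->
  let M := L2norm Omega u0 + 1 in
  exists L : R, forall u1 u2 : R -> 'rV[R]_N -> R,
    Y_M Omega T M u1 -> Y_M Omega T M u2 ->
    forall t, 0 <= t <= T ->
      L2norm Omega (fun x => f_delta Omega lambda delta (u1 t) x
                             - f_delta Omega lambda delta (u2 t) x)
        <= L * L2norm Omega (fun x => u1 t x - u2 t x).
Proof.
move=> Omega_open _ Omega_bounded _ lambda_gt0 /andP[delta_gt0 _] _ _ M.
set m := fine (lebN R N (setN Omega)).
exists (Num.sqrt (8 * lambda ^+ 2 * delta^-1 ^+ 6 * (1 + delta^-1 ^+ 2 * m ^+ 2))).
move=> u1 u2 [[u1_L2 _] _] [[u2_L2 _] _] t t_in.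
have [mu1 iu1] := u1_L2 t t_in; have [mu2 iu2] := u2_L2 t t_in.
exact: (f_delta_on_lipschitz (measurable_setN Omega_open)
  (setN_lty Omega_open Omega_bounded) (ltW lambda_gt0) delta_gt0 mu1 mu2 iu1 iu2).
Qed.
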